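(* Under the standing assumptions, let $g,h\in\mathcal G$ with $J_g=J_h\neq\{0\}$. Then $g=h$. Consequently, for every subgroupoid $H$ of $\mathcal G$, the map $\sigma:h\mapsto J_h$ restricted to $\mathcal S_H=\{h\in H: J_h\neq\{0\}\}$ is injective.
   Context: All rings and algebras are associative and unital. A groupoid is a nonempty set $\mathcal G$ with a partially defined associative multiplication in which every $g$ has an inverse $g^{-1}$, a left identity $r(g)=gg^{-1}$ and a right identity $d(g)=g^{-1}g$; $gh$ is defined iff $d(g)=r(h)$; $\mathcal G_0$ is the set of identities. Standing assumptions: $K$ commutative ring, $R$ a $K$-algebra, $\mathcal G$ a finite groupoid, $\beta=(\{E_g\},\{\beta_g\})$ a unital action of $\mathcal G$ on $R$: $E_g=E_{r(g)}$ is an ideal of $R$, unital with identity $1_g$ (so $1_{g^{-1}}=1_{d(g)}$), $\beta_g:E_{g^{-1}}\to E_g$ a $K$-algebra isomorphism, $\beta_e=\mathrm{id}_{E_e}$ for $e\in\mathcal G_0$, $\beta_g\beta_h(x)=\beta_{gh}(x)$ whenever $d(g)=r(h)$, $x\in E_{h^{-1}}$; $R=\bigoplus_{e\in\mathcal G_0}E_e$; and $R$ is a $\beta$-Galois extension of $R^\beta$: there exist $x_i,y_i\in R$ ($1\le i\le m$) with $\sum_i x_i\beta_g(y_i1_{g^{-1}})=1_g$ if $g\in\mathcal G_0$ and $=0$ otherwise. For $g\in\mathcal G$, $J_g=\{r\in E_g: r\beta_g(x1_{g^{-1}})=xr\ \forall x\in R\}$. *)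

From mathcomp Require Import all_boot all_algebra.

Set Implicit Arguments.
Unset Strict Implicit.
Unset Printing Implicit Defensive.

Import GRing.Theory.
Local Open Scope ring_scope.

(* Finite groupoids.  The carrier is a finType G; the partial product is  *)
(* modelled by a total function [gmul] which is only ever used (and only  *)
(* constrained) on composable pairs, i.e. when d g = r h, where           *)
(* r g = g g^{-1} and d g = g^{-1} g, exactly as in the paper.            *)

Section GroupoidDef.
Variable G : finType.
Variables (mul : G -> G -> G) (inv : G -> G).

Definition grng (g : G) : G := mul g (inv g).
Definition gdom (g : G) : G := mul (inv g) g.

Record is_groupoid : Prop := IsGroupoid {
  gdom_mul : forall g h, gdom g = grng h -> gdom (mul g h) = gdom h;
  grng_mul : forall g h, gdom g = grng h -> grng (mul g h) = grng g;
  gmulA : forall g h k, gdom g = grng h -> gdom h = grng k ->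
            mul (mul g h) k = mul g (mul h k);
  ginvK : forall g, inv (inv g) = g;
  gmul_rng : forall g, mul (grng g) g = g;
  gmul_dom : forall g, mul g (gdom g) = g
}.
End GroupoidDef.

Record groupoid (G : finType) := Groupoid {
  gmul : G -> G -> G;
  ginv : G -> G;
  groupoidP : is_groupoid gmul ginv
}.

Section GroupoidOps.
Variables (G : finType) (GG : groupoid G).
Definition r (g : G) := grng (gmul GG) (ginv GG) g.
Definition d (g : G) := gdom (gmul GG) (ginv GG) g.
Definition gid (e : G) : bool := [exists g, r g == e].

Definition subgroupoid (H : {set G}) : Prop :=
  H != set0 /\
  (forall g, g \in H -> ginv GG g \in H) /\
  (forall g h, g \in H -> h \in H -> d g = r h -> gmul GG g h \in H).
End GroupoidOps.

Section Action.
Variables (K : comPzRingType) (R : algType K) (G : finType) (GG : groupoid G).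

Definition is_ideal (I : R -> Prop) : Prop :=
  I 0 /\ (forall x y, I x -> I y -> I (x - y)) /\
  (forall a x, I x -> I (a * x)) /\ (forall a x, I x -> I (x * a)).

Record unital_action := UnitalAction {
  E : G -> R -> Prop;
  one : G -> R;
  beta : G -> R -> R;
  E_r : forall g, E g = E (r GG g);
  E_ideal : forall g, is_ideal (E g);
  one_in : forall g, E g (one g);
  one_unit : forall g x, E g x -> one g * x = x /\ x * one g = x;
  beta_in : forall g x, E (ginv GG g) x -> E g (beta g x);
  beta_add : forall g x y, E (ginv GG g) x -> E (ginv GG g) y ->
               beta g (x + y) = beta g x + beta g y;
  beta_mul : forall g x y, E (ginv GG g) x -> E (ginv GG g) y ->
               beta g (x * y) = beta g x * beta g y;
  beta_scale : forall g (a : K) x, E (ginv GG g) x ->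
               beta g (a *: x) = a *: beta g x;
  beta_one : forall g, beta g (one (ginv GG g)) = one g;
  beta_inj : forall g x y, E (ginv GG g) x -> E (ginv GG g) y ->
               beta g x = beta g y -> x = y;
  beta_surj : forall g y, E g y -> exists2 x, E (ginv GG g) x & beta g x = y;
  beta_id : forall e x, gid GG e -> E e x -> beta e x = x;
  beta_comp : forall g h x, d GG g = r GG h -> E (ginv GG h) x ->
               beta g (beta h x) = beta (gmul GG g h) x;
  R_sum : forall x : R, exists f : G -> R,
            (forall e, gid GG e -> E e (f e)) /\ x = \sum_(e | gid GG e) f e;
  R_direct : forall f : G -> R, (forall e, gid GG e -> E e (f e)) ->
            \sum_(e | gid GG e) f e = 0 -> forall e, gid GG e -> f e = 0
}.

Definition galois (A : unital_action) : Prop :=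
  exists (m : nat) (x y : 'I_m -> R), forall g : G,
    \sum_(i < m) x i * beta A g (y i * one A (ginv GG g)) =
      if gid GG g then one A g else 0.

Definition J (A : unital_action) (g : G) (z : R) : Prop :=
  E A g z /\ forall x : R, z * beta A g (x * one A (ginv GG g)) = x * z.

End Action.

From Pilot Require Import Defs.
From mathcomp Require Import all_boot all_algebra.
Local Open Scope ring_scope.
Import GRing.Theory.

Set Implicit Arguments.
Unset Strict Implicit.
Unset Printing Implicit Defensive.

(* Proof idea (Lemma 3.6).  Let 0 <> z in J_g = J_h.  Since z lies in      *)
(* E_g = E_{r(g)} and in E_h = E_{r(h)}, and R is the direct sum of the    *)
(* ideals E_e, we get r(g) = r(h); hence k := g^-1 h is defined and g k = h. *)
(* For any x, y in R the defining property of J_g and J_h gives            *)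
(*        z beta_g(x beta_k(y 1_{k^-1})) = x y z.                          *)
(* Summing over a Galois coordinate system (x_i, y_i): if k were not an     *)
(* identity, the left-hand side vanishes, while the right-hand side is      *)
(* sum_i x_i y_i z = z (the Galois identity at the identity r(h)).  So      *)
(* z = 0, a contradiction; thus k is an identity, k = d(g), and h = g.      *)

Section GroupoidFacts.
Variables (G : finType) (GG : groupoid G).
Local Notation mul := (gmul GG).
Local Notation inv := (ginv GG).
Let GP := groupoidP GG.

Lemma r_inv g : r GG (inv g) = d GG g.
Proof. by rewrite /r /d /grng /gdom (ginvK GP). Qed.

Lemma d_inv g : d GG (inv g) = r GG g.
Proof. by rewrite /r /d /grng /gdom (ginvK GP). Qed.

Lemma r_idem g : r GG (r GG g) = r GG g.
Proof. by apply: (grng_mul GP); rewrite -/(d GG g) -/(r GG (inv g)) r_inv. Qed.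

Lemma d_r g : d GG (r GG g) = r GG g.
Proof.
rewrite /d /r /grng (gdom_mul GP) -/(d GG (inv g)) ?d_inv //.
by rewrite -/(d GG g) -/(r GG (inv g)) r_inv.
Qed.

Lemma gid_r g : gid GG (r GG g).
Proof. by apply/existsP; exists g. Qed.

Lemma gid_rE e : gid GG e -> r GG e = e.
Proof. by case/existsP=> g /eqP <-; rewrite r_idem. Qed.

Lemma gid_dE e : gid GG e -> d GG e = e.
Proof. by case/existsP=> g /eqP <-; rewrite d_r. Qed.

Section LeftQuotient.
Variables g h : G.
Hypothesis rgh : r GG g = r GG h.

Let composable : gdom mul inv (inv g) = grng mul inv h.
Proof. by rewrite -/(d GG _) -/(r GG _) d_inv. Qed.

Lemma r_ldiv : r GG (mul (inv g) h) = d GG g.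
Proof. by rewrite /r (grng_mul GP composable) -/(r GG (inv g)) r_inv. Qed.

Lemma mul_ldiv : mul g (mul (inv g) h) = h.
Proof.
rewrite -(gmulA GP) //; last by rewrite -/(d GG _) -/(r GG _) r_inv.
by rewrite -/(grng mul inv g) -/(r GG g) rgh (gmul_rng GP).
Qed.

Lemma gid_ldiv_eq : gid GG (mul (inv g) h) -> g = h.
Proof.
move=> /gid_rE; rewrite r_ldiv => kE.
by rewrite -mul_ldiv -kE /d (gmul_dom GP).
Qed.
End LeftQuotient.
End GroupoidFacts.

Section ActionFacts.
Variables (K : comPzRingType) (R : algType K) (G : finType)
  (GG : groupoid G) (A : unital_action R GG).
Local Notation mul := (gmul GG).
Local Notation inv := (ginv GG).
Local Notation E := (E A).
Local Notation one := (Defs.one A).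
Local Notation beta := (beta A).

Lemma E0 g : E g 0.
Proof. by have [] := E_ideal A g. Qed.

Lemma EB g a b : E g a -> E g b -> E g (a - b).
Proof. by have [_ [sub_closed _]] := E_ideal A g; apply: sub_closed. Qed.

Lemma EN g a : E g a -> E g (- a).
Proof. by move=> Ea; rewrite -sub0r; apply: EB (E0 g) Ea. Qed.

Lemma ED g a b : E g a -> E g b -> E g (a + b).
Proof. by move=> Ea Eb; rewrite -[b]opprK; apply: EB Ea (EN Eb). Qed.

Lemma EMl g a b : E g b -> E g (a * b).
Proof. by have [_ [_ [mul_closed _]]] := E_ideal A g; apply: mul_closed. Qed.

Lemma E_inv g : E (inv g) = E (d GG g).
Proof. by rewrite (E_r A (inv g)) r_inv. Qed.

Lemma E_gid_inv e : gid GG e -> E (inv e) = E e.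
Proof. by move=> ide; rewrite E_inv gid_dE. Qed.

Lemma one_eq a b : E a = E b -> one a = one b.
Proof.
move=> Eab.
have Eab_one : E a (one b) by rewrite Eab; apply: one_in.
have Eba_one : E b (one a) by rewrite -Eab; apply: one_in.
have [ab _] := one_unit Eab_one; have [_ ba] := one_unit Eba_one.
by rewrite -[LHS]ba ab.
Qed.

Lemma beta0 g : beta g 0 = 0.
Proof.
have := beta_add (E0 (inv g)) (E0 (inv g)).
by rewrite addr0 => /eqP; rewrite -subr_eq subrr => /eqP <-.
Qed.

Lemma beta_sum g n (F : 'I_n -> R) : (forall i, E (inv g) (F i)) ->
  beta g (\sum_(i < n) F i) = \sum_(i < n) beta g (F i).
Proof.
move=> EF.
suff [] : E (inv g) (\sum_(i < n) F i) /\
          beta g (\sum_(i < n) F i) = \sum_(i < n) beta g (F i) by [].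
apply: (big_ind2 (fun a b => E (inv g) a /\ beta g a = b)).
- by split; [apply: E0 | apply: beta0].
- by move=> a1 b1 a2 b2 [E1 <-] [E2 <-]; split; [apply: ED | apply: beta_add].
- by move=> i _; split.
Qed.

(* Since R is the direct sum of the E_e, two ideals attached to distinct  *)
(* identities meet in 0.                                                   *)
Lemma E_disjoint g h z : E g z -> E h z -> r GG g <> r GG h -> z = 0.
Proof.
rewrite (E_r A g) (E_r A h) => Egz Ehz neq.
have neq' : (r GG h == r GG g) = false by apply/eqP => /esym.
pose f e := if e == r GG g then z else if e == r GG h then - z else 0.
have Ef : forall e, gid GG e -> E e (f e).
  move=> e _; rewrite /f; case: eqP => [-> //|_].
  by case: eqP => [->|_]; [apply: EN | apply: E0].
have sum_f : \sum_(e | gid GG e) f e = 0.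
  rewrite (bigD1 (r GG g)) ?gid_r //= (bigD1 (r GG h)) /=; last first.
    by rewrite gid_r neq'.
  rewrite big1 => [|e /andP [/andP [_ /negbTE ng] /negbTE nh]]; last first.
    by rewrite /f ng nh.
  by rewrite /f eqxx neq' eqxx addr0 subrr.
by have := R_direct Ef sum_f (gid_r GG g); rewrite /f eqxx.
Qed.

Lemma J_comp g k z x y : d GG g = r GG k -> J A g z -> J A (mul g k) z ->
  z * beta g (x * beta k (y * one (inv k))) = x * (y * z).
Proof.
move=> dgk [_ Jg] [_ Jgk].
have Eyk : E (inv k) (y * one (inv k)) by apply/EMl/one_in.
have Ew : E (inv g) (beta k (y * one (inv k))).
  by rewrite E_inv dgk -(E_r A k); apply: beta_in.
have [unit_w _] := one_unit Ew.
have one_k : one (inv k) = one (inv (mul g k)).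
  apply: one_eq; rewrite !E_inv /d (gdom_mul (groupoidP GG)) //.
rewrite -unit_w mulrA beta_mul //; last by apply/EMl/one_in.
by rewrite (beta_comp dgk Eyk) mulrA Jg -mulrA one_k Jgk mulrA.
Qed.

Section GaloisCoordinates.
Variables (n : nat) (x y : 'I_n -> R).
Hypothesis Hxy : forall g : G,
  \sum_(i < n) x i * beta g (y i * one (inv g)) =
    if gid GG g then one g else 0.

(* At an identity e the Galois condition reads sum_i x_i y_i 1_e = 1_e,   *)
(* so sum_i x_i y_i acts as the identity on each ideal E_g.                 *)
Lemma galois_unit g z : E g z -> \sum_(i < n) x i * (y i * z) = z.
Proof.
move=> Egz; set e := r GG g.
have ide : gid GG e := gid_r GG g.
have Eez : E e z by rewrite -(E_r A g).
have [one_z _] := one_unit Eez.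
have one_inv : one (inv e) = one e by apply: one_eq; rewrite E_gid_inv.
have := Hxy e; rewrite ide => sum_e.
rewrite -[RHS]one_z -[in RHS]sum_e mulr_suml; apply: eq_bigr => i _.
have Ey : E e (y i * one e) by apply/EMl/one_in.
by rewrite one_inv beta_id // -!mulrA one_z.
Qed.

Lemma J_common_eq g h z : J A g z -> J A h z -> z <> 0 -> g = h.
Proof.
move=> Jgz Jhz nz.
have rgh : r GG g = r GG h.
  case: (eqVneq (r GG g) (r GG h)) => // /eqP neq.
  by case: nz; apply: E_disjoint Jgz.1 Jhz.1 neq.
set k := mul (inv g) h.
have dgk : d GG g = r GG k by rewrite r_ldiv.
have [idk | nidk] := boolP (gid GG k); first exact: gid_ldiv_eq rgh idk.
have sum_k := Hxy k; rewrite (negbTE nidk) in sum_k.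
have Eterms i : E (inv g) (x i * beta k (y i * one (inv k))).
  by apply: EMl; rewrite E_inv dgk -(E_r A k); apply/beta_in/EMl/one_in.
have conj_sum : z * beta g (\sum_(i < n) x i * beta k (y i * one (inv k)))
                = \sum_(i < n) x i * (y i * z).
  rewrite beta_sum // mulr_sumr; apply: eq_bigr => i _.
  by apply: J_comp dgk Jgz _; rewrite mul_ldiv.
by case: nz; rewrite -(galois_unit Jgz.1) -conj_sum sum_k beta0 mulr0.
Qed.
End GaloisCoordinates.
End ActionFacts.

Theorem lemma3p6 (K : comPzRingType) (R : algType K) (G : finType)
    (GG : groupoid G) (A : unital_action R GG) (HA : galois A) :
  (forall g h : G, (forall z, J A g z <-> J A h z) ->
     (exists z, J A g z /\ z <> 0) -> g = h) /\
  (forall H : {set G}, subgroupoid GG H ->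
     forall g h : G, g \in H -> h \in H ->
       (exists z, J A g z /\ z <> 0) -> (exists z, J A h z /\ z <> 0) ->
       (forall z, J A g z <-> J A h z) -> g = h).
Proof.
have [n [x [y Hxy]]] := HA.
have injective_J g h : (forall z, J A g z <-> J A h z) ->
    (exists z, J A g z /\ z <> 0) -> g = h.
  move=> Jgh [z [Jgz nz]].
  exact: (J_common_eq Hxy Jgz ((Jgh z).1 Jgz) nz).
split; first exact: injective_J.
by move=> H _ g h _ _ nzg _ Jgh; apply: injective_J.
Qed.
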